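(* Let $N=(G=(V,E),\sigma,u,s)$ be a skew-symmetric network and $f$ an IS-flow in $N$. Then $f$ has maximum value among all IS-flows in $N$ if and only if there is no r-augmenting path for $f$.
   Context: A skew-symmetric graph is a finite directed graph $G=(V,E)$ (parallel arcs allowed) with a map $\sigma$ of $V\cup E$ onto itself such that $\sigma(x)\ne x$, $\sigma(\sigma(x))=x$ for all $x$, $\sigma(V)=V$, and for each arc $a$ from $v$ to $w$, $\sigma(a)$ is an arc from $\sigma(w)$ to $\sigma(v)$; write $a'=\sigma(a)$. A function $h$ on $E$ is symmetric if $h(a)=h(\sigma(a))$. A skew-symmetric network is $N=(G,\sigma,u,s)$ with $u:E\to\mathbb Z_{\ge0}$ symmetric and source $s$; $s'=\sigma(s)$ is the sink. A flow is $f:E\to\mathbb R_{\ge0}$ with $f\le u$ and conservation ($\sum_{\text{out}}f-\sum_{\text{in}}f=0$) at every node other than $s,s'$; its value is $|f|=\sum_{\text{out of }s}f-\sum_{\text{into }s}f$. An IS-flow is an integer-valued symmetric flow. $G^+=(V,E^+)$ is obtained from $G$ by adding, for each arc $a=(x,y)\in E$, a reverse arc $a^R=(y,x)$; $\sigma$ extends by $\sigma(a^R)=(\sigma(a))^R$. The residual capacity is $u_f(a)=u(a)-f(a)$ for $a\in E$ and $u_f(a^R)=f(a)$. For a nonnegative integer symmetric function $h$ on the arcs of a skew-symmetric graph, a directed path $P$ is $h$-regular if $h(a)>0$ for every arc $a$ of $P$ and every arc $a$ of $P$ whose mate $a'$ also lies on $P$ satisfies $h(a)\ge2$. An r-augmenting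 path for $f$ is a $u_f$-regular path from $s$ to $s'$ in $G^+$. *)

From mathcomp Require Import all_boot all_order all_algebra.
Set Implicit Arguments. Unset Strict Implicit. Unset Printing Implicit Defensive.
Import Order.TTheory GRing.Theory Num.Theory.

Record skewGraph := SkewGraph {
  sg_V : finType;
  sg_E : finType;
  tail : sg_E -> sg_V;
  head : sg_E -> sg_V;
  sigV : sg_V -> sg_V;
  sigE : sg_E -> sg_E;
  sigV_invol : involutive sigV;
  sigE_invol : involutive sigE;
  sigV_nofix : forall v, sigV v != v;
  sigE_nofix : forall a, sigE a != a;
  tail_sigE : forall a, tail (sigE a) = sigV (head a);
  head_sigE : forall a, head (sigE a) = sigV (tail a)
}.

Section Defs.
Variable G : skewGraph.
Local Notation V := (sg_V G).
Local Notation E := (sg_E G).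

Definition sym_fun (h : E -> nat) := forall a, h (sigE a) = h a.

Definition outflow (f : E -> nat) (v : V) : int :=
  (\sum_(a | tail a == v) (f a)%:Z - \sum_(a | head a == v) (f a)%:Z)%R.

(* f is a flow in the network (G, sigma, u, s) (source s, sink sigV s);
   nonnegativity is automatic since values are in nat *)
Definition is_int_flow (u : E -> nat) (s : V) (f : E -> nat) :=
  (forall a, f a <= u a) /\
  (forall v, v != s -> v != sigV s -> outflow f v = 0%R).

Definition is_ISflow (u : E -> nat) (s : V) (f : E -> nat) :=
  is_int_flow u s f /\ sym_fun f.

Definition flow_value (s : V) (f : E -> nat) : int := outflow f s.

(* The graph G^+ : arcs are inl a (= a) and inr a (= a^R, reversed a). *)
Definition Eplus := (E + E)%type.
Definition tailp (b : Eplus) : V :=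
  match b with inl a => tail a | inr a => head a end.
Definition headp (b : Eplus) : V :=
  match b with inl a => head a | inr a => tail a end.
Definition sigP (b : Eplus) : Eplus :=
  match b with inl a => inl (sigE a) | inr a => inr (sigE a) end.

Definition resid (u f : E -> nat) (b : Eplus) : nat :=
  match b with inl a => u a - f a | inr a => f a end.

Fixpoint pwalk (x y : V) (p : seq Eplus) : bool :=
  match p with
  | [::] => x == y
  | b :: q => (tailp b == x) && pwalk (headp b) y q
  end.

Definition is_dpath (x y : V) (p : seq Eplus) : bool :=
  pwalk x y p && uniq (x :: map headp p).

Definition regular (h : Eplus -> nat) (p : seq Eplus) : bool :=
  all (fun b => 0 < h b) p &&
  all (fun b => (sigP b \in p) ==> (1 < h b)) p.

Definition r_augmenting (u : E -> nat) (s : V) (f : E -> nat) (p : seq Eplus) :=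
  is_dpath s (sigV s) p && regular (resid u f) p.

End Defs.

From mathcomp Require Import all_boot all_order all_algebra zify ring.
Set Implicit Arguments. Unset Strict Implicit. Unset Printing Implicit Defensive.
Import Order.TTheory GRing.Theory Num.Theory.

(* If an IS-flow g has larger value than f, the positive parts of g - f on the arcs
   of G^+ form a symmetric function h, below the residual capacities of f, that is
   conserved except at s and s'. Walking greedily from s and charging each step both
   to the arc and to its mate, we reach s' by a walk in which every arc and its mate
   together occur at most h times; removing cycles leaves an r-augmenting path.
   Conversely, pushing one unit along an r-augmenting path and one along its mirror
   image yields an IS-flow of value |f| + 2; regularity is exactly what keeps this
   double push within the capacities. *)

Local Open Scope ring_scope.

Section ResidualGraph.
Variable G : skewGraph.
Local Notation V := (sg_V G).
Local Notation E := (sg_E G).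
Local Notation Ep := (Eplus G).

Lemma sigV_eq (x y : V) : (sigV x == y) = (x == sigV y).
Proof. by apply/eqP/eqP => [<-|->]; rewrite sigV_invol. Qed.

Lemma sigP_invol : involutive (@sigP G).
Proof. by case=> a /=; rewrite sigE_invol. Qed.

Lemma sigP_neq (b : Ep) : sigP b != b.
Proof. by case: b => a /=; apply/eqP => -[] /eqP; apply/negP/sigE_nofix. Qed.

Lemma tailp_sigP (b : Ep) : tailp (sigP b) = sigV (headp b).
Proof. by case: b => a /=; rewrite ?tail_sigE ?head_sigE. Qed.

Lemma headp_sigP (b : Ep) : headp (sigP b) = sigV (tailp b).
Proof. by case: b => a /=; rewrite ?tail_sigE ?head_sigE. Qed.

Definition outflowp (k : Ep -> nat) (v : V) : int :=
  \sum_(b | tailp b == v) (k b)%:Z - \sum_(b | headp b == v) (k b)%:Z.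

Lemma eq_outflowp (k1 k2 : Ep -> nat) v :
  k1 =1 k2 -> outflowp k1 v = outflowp k2 v.
Proof.
by move=> k12; rewrite /outflowp; congr (_ - _); apply: eq_bigr => b _; rewrite k12.
Qed.

Lemma outflowpD (k1 k2 : Ep -> nat) v :
  outflowp (fun b => k1 b + k2 b)%N v = outflowp k1 v + outflowp k2 v.
Proof.
have sumD (P : pred Ep) : \sum_(b | P b) (k1 b + k2 b)%N%:Z =
    \sum_(b | P b) (k1 b)%:Z + \sum_(b | P b) (k2 b)%:Z.
  by rewrite -big_split; apply: eq_bigr => b _; rewrite PoszD.
by rewrite /outflowp !sumD; ring.
Qed.

Lemma sum_indicator (T : finType) (P : pred T) (b : T) :
  \sum_(c | P c) ((c == b) : nat)%:Z = (P b : nat)%:Z.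
Proof.
case Pb: (P b); last by rewrite big1 // => c Pc; case: eqP => // cb; rewrite -cb Pc in Pb.
by rewrite (bigD1 b) //= eqxx big1 ?addr0 // => c /andP[_ /negbTE ->].
Qed.

Lemma outflowp_pred1 (b : Ep) v :
  outflowp (fun c => c == b : nat) v = (tailp b == v : nat)%:Z - (headp b == v : nat)%:Z.
Proof. by rewrite /outflowp !sum_indicator. Qed.

Lemma outflowp_sigP (k : Ep -> nat) v :
  outflowp (fun b => k (sigP b)) v = - outflowp k (sigV v).
Proof.
rewrite /outflowp (reindex_inj (inv_inj sigP_invol)) /=.
rewrite [X in _ - X](reindex_inj (inv_inj sigP_invol)) /=.
under eq_bigl do rewrite tailp_sigP sigV_eq.
under [X in _ - X]eq_bigl do rewrite headp_sigP sigV_eq.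
under eq_bigr do rewrite sigP_invol.
under [X in _ - X]eq_bigr do rewrite sigP_invol.
ring.
Qed.

Lemma outflowp_count_walk (p : seq Ep) x y v : pwalk x y p ->
  outflowp (fun b => count_mem b p) v = (x == v : nat)%:Z - (y == v : nat)%:Z.
Proof.
elim: p x => [|b p IH] x /=.
  by move=> /eqP ->; rewrite subrr /outflowp !big1 ?subrr.
move=> /andP[/eqP <- walk_p].
rewrite (@eq_outflowp _ (fun c => (c == b) + count_mem c p)%N); last first.
  by move=> c; rewrite eq_sym.
by rewrite outflowpD outflowp_pred1 (IH _ walk_p); ring.
Qed.

Lemma outflowB_outflowp (f g : E -> nat) (k : Ep -> nat) v :
  (forall a, (k (inl a))%:Z - (k (inr a))%:Z = (g a)%:Z - (f a)%:Z) ->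
  outflow g v - outflow f v = outflowp k v.
Proof.
move=> kE; rewrite /outflow /outflowp !big_sumType /=.
have -> : forall P Q : pred E,
    \sum_(a | P a) (k (inl a))%:Z + \sum_(a | Q a) (k (inr a))%:Z -
    (\sum_(a | Q a) (k (inl a))%:Z + \sum_(a | P a) (k (inr a))%:Z) =
    \sum_(a | P a) ((g a)%:Z - (f a)%:Z) - \sum_(a | Q a) ((g a)%:Z - (f a)%:Z).
  by move=> P Q; rewrite -!(eq_bigr _ (fun a _ => kE a)) !sumrB; ring.
by rewrite !sumrB; ring.
Qed.

Lemma outflowp_gt0_arc (k : Ep -> nat) v :
  0 < outflowp k v -> exists2 b, tailp b = v & (0 < k b)%N.
Proof.
move=> k_pos; have /exists_inP[b /eqP tail_b k_b] : [exists (b | tailp b == v), 0 < k b]%N.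
  apply: contraTT k_pos => /exists_inPn k0.
  rewrite /outflowp big1 => [|b /k0]; last by rewrite lt0n negbK => /eqP ->.
  by rewrite sub0r -leNgt oppr_le0 sumr_ge0.
by exists b.
Qed.

Definition mate_count (p : seq Ep) (b : Ep) : nat :=
  count_mem b p + count_mem (sigP b) p.

Lemma mate_count_sigP p b : mate_count p (sigP b) = mate_count p b.
Proof. by rewrite /mate_count sigP_invol addnC. Qed.

Lemma mate_count_rcons p b c :
  mate_count (rcons p b) c = (mate_count p c + (b == c) + (b == sigP c))%N.
Proof. by rewrite /mate_count -!cats1 !count_cat /=; lia. Qed.

Lemma sum_count_mem (T : finType) (s : seq T) : (\sum_x count_mem x s)%N = size s.
Proof.
elim: s => [|y s IH] /=; first by rewrite big1.
rewrite big_split /= IH (bigD1 y) //= eqxx big1 // => x /negbTE.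
by rewrite eq_sym => ->.
Qed.

Lemma sum_mate_count p : (\sum_b mate_count p b)%N = (size p).*2.
Proof.
rewrite big_split /= [X in (_ + X)%N](reindex_inj (inv_inj sigP_invol)) /=.
by under [X in (_ + X)%N]eq_bigr do rewrite sigP_invol; rewrite sum_count_mem addnn.
Qed.

Lemma outflowp_mate_count p x y v : pwalk x y p ->
  outflowp (mate_count p) v = (x == v : nat)%:Z - (y == v : nat)%:Z
                              + (sigV y == v : nat)%:Z - (sigV x == v : nat)%:Z.
Proof.
move=> walk_p; rewrite /mate_count outflowpD (outflowp_sigP (fun b => count_mem b p)).
rewrite !(outflowp_count_walk _ walk_p).
by rewrite -!sigV_eq; ring.
Qed.

Lemma pwalk_rcons (p : seq Ep) x y b :
  pwalk x y p -> tailp b = y -> pwalk x (headp b) (rcons p b).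
Proof.
elim: p x => [|c p IH] x /=; first by move=> /eqP -> ->; rewrite !eqxx.
by move=> /andP[-> walk_p] tail_b; rewrite IH.
Qed.

Lemma walk_below_sym_flow (h : Ep -> nat) s :
  (forall b, h (sigP b) = h b) ->
  (forall v, v != s -> v != sigV s -> outflowp h v = 0) ->
  0 < outflowp h s ->
  exists2 p, pwalk s (sigV s) p & forall b, (mate_count p b <= h b)%N.
Proof.
move=> h_sym h_cons h_pos.
suff walk_from W v : pwalk s v W -> (forall b, (mate_count W b <= h b)%N) ->
    exists2 p, pwalk s (sigV s) p & forall b, (mate_count p b <= h b)%N.
  by apply: (walk_from [::] s) => /=.
have [n] := ubnP (\sum_b h b - (size W).*2)%N.
elim: n W v => // n IH W v lt_n walk_W W_le_h.
have [v_s' | v_ne_s'] := eqVneq v (sigV s); first by rewrite v_s' in walk_W; exists W.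
set r := fun b => (h b - mate_count W b)%N.
have r_pos : 0 < outflowp r v.
  have : outflowp h v = outflowp r v + outflowp (mate_count W) v.
    by rewrite -outflowpD; apply: eq_outflowp => b; rewrite subnK.
  rewrite (outflowp_mate_count _ walk_W) eqxx (negbTE (sigV_nofix v)).
  rewrite [sigV s == v]eq_sym (negbTE v_ne_s').
  have [<- | s_ne_v] := eqVneq s v; first by move: h_pos; lia.
  have -> : outflowp h v = 0 by apply: h_cons; rewrite // eq_sym.
  lia.
have [b tail_b r_b] := outflowp_gt0_arc r_pos.
have W'_le_h c : (mate_count (rcons W b) c <= h c)%N.
  rewrite mate_count_rcons; have := W_le_h c.
  have [<- | b_ne_c] := eqVneq b c.
    by rewrite eq_sym (negbTE (sigP_neq b)); move: r_b; rewrite /r; lia.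
  have [b_eq | _] := eqVneq b (sigP c); last by lia.
  by move: r_b; rewrite /r b_eq h_sym mate_count_sigP; lia.
apply: (IH (rcons W b) (headp b)) => //; last exact: pwalk_rcons walk_W tail_b.
have : (\sum_c mate_count (rcons W b) c <= \sum_c h c)%N by apply: leq_sum => c _.
rewrite sum_mate_count size_rcons.
by move: lt_n; lia.
Qed.

Lemma pwalk_drop (p : seq Ep) x y i b0 : pwalk x y p -> (i < size p)%N ->
  pwalk (headp (nth b0 p i)) y (drop i.+1 p).
Proof.
elim: p x i => [|b p IH] x [|i] //= /andP[_ walk_p]; first by rewrite drop0.
exact: IH walk_p.
Qed.

Lemma pwalk_dpath (p : seq Ep) x y :
  pwalk x y p -> exists2 q, is_dpath x y q & {subset q <= p}.
Proof.
elim: p x => [|b p IH] x /=.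
  by move=> /eqP ->; exists [::]; rewrite /is_dpath /= ?eqxx.
move=> /andP[/eqP tail_b /IH[q /andP[walk_q uniq_q] q_sub]].
set l := b :: q.
have walk_l : pwalk x y l by rewrite /= tail_b eqxx.
have l_sub : {subset l <= b :: p}.
  by move=> c; rewrite !inE => /orP[->|/q_sub ->]; rewrite ?orbT.
have [x_l | x_notin_l] := boolP (x \in map (@headp G) l); last first.
  by exists l; rewrite // /is_dpath walk_l /= x_notin_l.
set i := index x (map (@headp G) l).
have lt_i : (i < size l)%N by rewrite -(size_map (@headp G)) index_mem.
have head_i : headp (nth b l i) = x by rewrite -(nth_map b x) // nth_index.
exists (drop i.+1 l); last by move=> c /mem_drop /l_sub.
have uniq_l : uniq (map (@headp G) l) by [].
have := pwalk_drop b walk_l lt_i; rewrite head_i /is_dpath => ->.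
rewrite andTb cons_uniq map_drop drop_uniq // andbT.
move: uniq_l; rewrite -{1}(cat_take_drop i.+1 (map (@headp G) l)) cat_uniq.
case/and3P=> _ disj _; apply: contra disj => x_drop; apply/hasP; exists x => //.
by rewrite (take_nth x) ?size_map // mem_rcons inE (nth_map b) // head_i eqxx.
Qed.

Lemma dpath_uniq (p : seq Ep) x y : is_dpath x y p -> uniq p.
Proof. by move=> /andP[_]; rewrite cons_uniq => /andP[_ /map_uniq]. Qed.

Lemma regular_sub (k : Ep -> nat) (p q : seq Ep) :
  (forall b, (mate_count p b <= k b)%N) -> {subset q <= p} -> regular k q.
Proof.
move=> p_le_k q_sub.
have count_pos c : c \in p -> (0 < count_mem c p)%N by rewrite -has_count has_pred1.
apply/andP; split; apply/allP => b /q_sub b_p.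
  by have := p_le_k b; have := count_pos _ b_p; rewrite /mate_count; lia.
apply/implyP => /q_sub /count_pos sb_p.
by have := p_le_k b; have := count_pos _ b_p; rewrite /mate_count; lia.
Qed.

Lemma mate_count_le_regular (k : Ep -> nat) (p : seq Ep) :
  (forall b, k (sigP b) = k b) -> uniq p -> regular k p ->
  forall b, (mate_count p b <= k b)%N.
Proof.
move=> k_sym uniq_p /andP[/allP k_pos /allP k_mates] b.
rewrite /mate_count !count_uniq_mem //.
have := k_mates b; have := k_mates (sigP b); have := k_pos b; have := k_pos (sigP b).
rewrite sigP_invol k_sym.
by case: (b \in p); case: (sigP b \in p) => /=; lia.
Qed.

Lemma resid_sym (u f : E -> nat) : sym_fun u -> sym_fun f ->
  forall b, resid u f (sigP b) = resid u f b.
Proof. by move=> u_sym f_sym [] a /=; rewrite ?u_sym f_sym. Qed.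

Definition diffp (f g : E -> nat) (b : Ep) : nat :=
  match b with inl a => g a - f a | inr a => f a - g a end.

Lemma diffp_sym (f g : E -> nat) : sym_fun f -> sym_fun g ->
  forall b, diffp f g (sigP b) = diffp f g b.
Proof. by move=> f_sym g_sym [] a /=; rewrite f_sym g_sym. Qed.

Lemma diffp_le_resid (u f g : E -> nat) : (forall a, g a <= u a)%N ->
  forall b, (diffp f g b <= resid u f b)%N.
Proof. by move=> g_le_u [] a /=; [apply: leq_sub2r | apply: leq_subr]. Qed.

Lemma outflowp_diffp (f g : E -> nat) v :
  outflowp (diffp f g) v = outflow g v - outflow f v.
Proof. by rewrite -(@outflowB_outflowp f g) // => a /=; lia. Qed.

Lemma augmenting_of_larger_flow (u : E -> nat) s (f g : E -> nat) :
  is_ISflow u s f -> is_ISflow u s g -> flow_value s f < flow_value s g ->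
  exists p, r_augmenting u s f p.
Proof.
move=> [[_ f_cons] f_sym] [[g_le_u g_cons] g_sym] lt_fg.
have [p walk_p p_le] : exists2 p, pwalk s (sigV s) p &
    forall b, (mate_count p b <= diffp f g b)%N.
  apply: walk_below_sym_flow => [|v ne_s ne_s'|]; rewrite ?outflowp_diffp.
  - exact: diffp_sym.
  - by rewrite f_cons // g_cons // subrr.
  - by rewrite subr_gt0.
have [q dpath_q q_sub] := pwalk_dpath walk_p.
exists q; rewrite /r_augmenting dpath_q; apply: regular_sub q_sub => b.
exact: leq_trans (p_le b) (diffp_le_resid _ g_le_u b).
Qed.

Definition augment (f : E -> nat) (p : seq Ep) (a : E) : nat :=
  f a + mate_count p (inl a) - mate_count p (inr a).

Section Augment.
Variables (u : E -> nat) (s : V) (f : E -> nat) (p : seq Ep).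
Hypotheses (u_sym : sym_fun u) (f_flow : is_ISflow u s f).
Hypothesis p_aug : r_augmenting u s f p.

Lemma mate_count_le_resid b : (mate_count p b <= resid u f b)%N.
Proof.
case: f_flow p_aug => [_ f_sym] /andP[dpath_p reg_p].
exact: mate_count_le_regular (resid_sym u_sym f_sym) (dpath_uniq dpath_p) reg_p b.
Qed.

Lemma augment_sym : sym_fun (augment f p).
Proof.
case: f_flow => _ f_sym a; rewrite /augment f_sym.
by rewrite -[inl _]/(sigP (inl a)) -[inr _]/(sigP (inr a)) !mate_count_sigP.
Qed.

Lemma augment_le a : (augment f p a <= u a)%N.
Proof.
have := mate_count_le_resid (inl a); have := mate_count_le_resid (inr a).
by case: f_flow => [[/(_ a) f_le_u _] _]; rewrite /augment /=; lia.
Qed.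

Lemma outflow_augment v : outflow (augment f p) v =
  outflow f v + 2 * ((s == v : nat)%:Z - (sigV s == v : nat)%:Z).
Proof.
case/andP: p_aug => /andP[walk_p _] _.
have : outflow (augment f p) v - outflow f v = outflowp (mate_count p) v.
  apply: outflowB_outflowp => a; have := mate_count_le_resid (inr a).
  by rewrite /augment /=; lia.
by rewrite (outflowp_mate_count _ walk_p) sigV_invol; lia.
Qed.

Lemma augment_ISflow : is_ISflow u s (augment f p).
Proof.
split; last exact: augment_sym.
split=> [|v ne_s ne_s']; first exact: augment_le.
case: f_flow => [[_ f_cons] _].
by rewrite outflow_augment f_cons // eq_sym (negbTE ne_s) eq_sym (negbTE ne_s').
Qed.

Lemma flow_value_augment : flow_value s (augment f p) = flow_value s f + 2.
Proof. by rewrite /flow_value outflow_augment eqxx (negbTE (sigV_nofix s)). Qed.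

End Augment.

End ResidualGraph.

Theorem mainTheorem4 (G : skewGraph) (u : sg_E G -> nat) (s : sg_V G)
    (hu : sym_fun u) (f : sg_E G -> nat) (hf : is_ISflow u s f) :
  (forall g, is_ISflow u s g -> (flow_value s g <= flow_value s f)%R) <->
  ~ (exists p, r_augmenting u s f p).
Proof.
split=> [f_max [p p_aug] | no_aug g g_flow].
  have := f_max _ (augment_ISflow hu hf p_aug).
  by rewrite (flow_value_augment hu hf p_aug); lia.
rewrite leNgt; apply/negP => lt_fg.
exact: no_aug (augmenting_of_larger_flow hf g_flow lt_fg).
Qed.
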